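(* Let $s=(x,y,u,v)\in\mathbb{R}^4$ with $x,y,u,v\ge0$, $x+y=2$ and $u+v=2$, and write $W^k(s)=(x^{(k)},y^{(k)},u^{(k)},v^{(k)})$. If $y^{(k)}v^{(k)}=0$ for every $k\ge0$, then $y^{(k)}=v^{(k)}=0$ for every $k\ge0$.
   Context: $W:\mathbb{R}^4\to\mathbb{R}^4$ is the map $W(x,y,u,v)=(x',y',u',v')$ with $x'=\tfrac12 xu+\tfrac14 yu$, $y'=\tfrac12 xv+\tfrac14 yu+\tfrac13 yv$, $u'=\tfrac12 xu+\tfrac12 xv+\tfrac14 yu+\tfrac13 yv$, $v'=\tfrac14 yu+\tfrac13 yv$. $W^k$ denotes the $k$-fold iterate ($W^0$ the identity). *)

From Stdlib Require Import Reals.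
Open Scope R_scope.

Definition R4 : Type := (R * R * R * R)%type.

Definition W (s : R4) : R4 :=
  let '(x, y, u, v) := s in
  ( 1/2 * x * u + 1/4 * y * u,
    1/2 * x * v + 1/4 * y * u + 1/3 * y * v,
    1/2 * x * u + 1/2 * x * v + 1/4 * y * u + 1/3 * y * v,
    1/4 * y * u + 1/3 * y * v ).

Fixpoint Witer (k : nat) (s : R4) : R4 :=
  match k with
  | O => s
  | S k' => W (Witer k' s)
  end.

Definition px (s : R4) : R := let '(x, _, _, _) := s in x.
Definition py (s : R4) : R := let '(_, y, _, _) := s in y.
Definition pu (s : R4) : R := let '(_, _, u, _) := s in u.
Definition pv (s : R4) : R := let '(_, _, _, v) := s in v.

(* The plane {y = v = 0} is invariant under W.  On the line u = 2, v = 0 the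
   map W halves y into both y and v, so y' v' = (y/2)^2, and W sends the line
   x = 2, y = 0 into that line when u + v = 2.  Hence, once y v = 0 at time 0,
   the product y v at time 1 or 2 is a square that vanishes only if y = v = 0. *)

From Stdlib Require Import Reals Lra Psatz.
Open Scope R_scope.

Lemma W_preserves_axis_plane (s : R4) :
  py s = 0 -> pv s = 0 -> py (W s) = 0 /\ pv (W s) = 0.
Proof.
  destruct s as [[[x y] u] v]; simpl; intros -> ->; split; ring.
Qed.

Lemma Witer_preserves_axis_plane (k : nat) (s : R4) :
  py s = 0 -> pv s = 0 -> py (Witer k s) = 0 /\ pv (Witer k s) = 0.
Proof.
  intros hy hv; induction k as [|k [IHy IHv]]; simpl.
  - split; assumption.
  - exact (W_preserves_axis_plane _ IHy IHv).
Qed.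

Lemma W_on_u2_v0 (x y : R) : W (x, y, 2, 0) = (x + y/2, y/2, x + y/2, y/2).
Proof. unfold W; f_equal; [f_equal; [f_equal|]|]; field. Qed.

Lemma W_on_x2_y0 (u v : R) : W (2, 0, u, v) = (u, v, u + v, 0).
Proof. unfold W; f_equal; [f_equal; [f_equal|]|]; field. Qed.

Lemma y_eq_0_of_u2_v0 (x y : R) :
  py (W (x, y, 2, 0)) * pv (W (x, y, 2, 0)) = 0 -> y = 0.
Proof. rewrite W_on_u2_v0; simpl; nra. Qed.

Lemma v_eq_0_of_x2_y0 (u v : R) :
  u + v = 2 ->
  py (W (W (2, 0, u, v))) * pv (W (W (2, 0, u, v))) = 0 -> v = 0.
Proof.
  intros huv; rewrite W_on_x2_y0, huv, W_on_u2_v0; simpl; nra.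
Qed.

Theorem lemma3p4 (x y u v : R) :
  0 <= x -> 0 <= y -> 0 <= u -> 0 <= v ->
  x + y = 2 -> u + v = 2 ->
  (forall k : nat, py (Witer k (x, y, u, v)) * pv (Witer k (x, y, u, v)) = 0) ->
  forall k : nat, py (Witer k (x, y, u, v)) = 0 /\ pv (Witer k (x, y, u, v)) = 0.
Proof.
  intros _ _ _ _ hxy huv hyv k.
  assert (hy_v : y = 0 /\ v = 0).
  { destruct (Rmult_integral _ _ (hyv 0%nat)) as [hy | hv]; simpl in *.
    - replace x with 2 in hyv by lra; subst y.
      split; [reflexivity | exact (v_eq_0_of_x2_y0 u v huv (hyv 2%nat))].
    - replace u with 2 in hyv by lra; subst v.
      split; [exact (y_eq_0_of_u2_v0 x y (hyv 1%nat)) | reflexivity]. }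
  destruct hy_v as [-> ->].
  apply Witer_preserves_axis_plane; reflexivity.
Qed.
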